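(* Let $T$ be a complete first-order theory with monster model $\mathcal{U}$, let $A\subseteq\mathcal{U}$ be small, and let $p\in S_x(\mathcal{U})$, $q\in S_y(\mathcal{U})$ be global types. If $p\geq_{D,A} q$, then $\delta_p\geq_{\mathbb{E},A}\delta_q$.
   Context: ''Small'' means of cardinality less than the saturation of $\mathcal{U}$; $x,y$ are disjoint finite tuples of variables. For $B\subseteq\mathcal{U}$, $\mathcal{L}_x(B)$ is the Boolean algebra of formulas in free variables $x$ with parameters from $B$ modulo $T$-equivalence (identified with $B$-definable subsets of $\mathcal{U}^x$), and $\mathcal{L}_x(B)$ is identified with a subalgebra of $\mathcal{L}_{xy}(B)$ via $\varphi(x)\mapsto\varphi(x)\wedge y=y$. A Keisler measure over $B$ in $x$ is a finitely additive probability measure on $\mathcal{L}_x(B)$; $\mathfrak{M}_x(B)$ is the set of these. For $\omega\in\mathfrak{M}_{xy}(B)$, $\pi_x(\omega)\in\mathfrak{M}_x(B)$ is $\pi_x(\omega)(\varphi(x))=\omega(\varphi(x)\wedge y=y)$ (similarly $\pi_y$), and $\omega|_{C}$ denotes restriction to $\mathcal{L}_{xy}(C)$ for $C\subseteq B$. For $p\in S_x(B)$, $\delta_p$ is the Dirac measure: $\delta_p(\varphi)=1$ if $\varphi\in p$ and $0$ otherwise. Domination of types: $p\geq_{D,A}q$ means there is $r\in S_{xy}(A)$ with $p|_A\subseteq r$ and $p\cup r\vdash q$. Extension space: for $\mu\in\mathfrak{M}_x(\mathcal{U})$ and $\lambda\in\mathfrak{M}_{xy}(A)$ with $\mu|_A=\pi_x(\lambda)$,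 $\operatorname{E}(\lambda,\mu)=\{\omega\in\mathfrak{M}_{xy}(\mathcal{U}):\omega|_A=\lambda,\ \pi_x(\omega)=\mu\}$. Extension domination: for $\mu\in\mathfrak{M}_x(\mathcal{U})$, $\nu\in\mathfrak{M}_y(\mathcal{U})$, $\mu\geq_{\mathbb{E},A}\nu$ means there is $\lambda\in\mathfrak{M}_{xy}(A)$ with $\pi_x(\lambda)=\mu|_A$ such that $\pi_y(\omega)=\nu$ for every $\omega\in\operatorname{E}(\lambda,\mu)$. *)

From HB Require Import structures.
From mathcomp Require Import all_boot all_order all_algebra.
From mathcomp Require Import boolp classical_sets cardinality reals.
Set Implicit Arguments. Unset Strict Implicit. Unset Printing Implicit Defensive.
Import Order.TTheory GRing.Theory Num.Theory.
Local Open Scope classical_set_scope.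
Local Open Scope ring_scope.

Record signature := Signature {
  Fun : Type; fun_ar : Fun -> nat;
  Rel : Type; rel_ar : Rel -> nat }.

Inductive term (L : signature) : Type :=
| tvar : nat -> term L
| tapp (f : Fun L) : ('I_(fun_ar f) -> term L) -> term L.

Inductive formula (L : signature) : Type :=
| fEq : term L -> term L -> formula L
| fRel (r : Rel L) : ('I_(rel_ar r) -> term L) -> formula L
| fNot : formula L -> formula L
| fAnd : formula L -> formula L -> formula L
| fEx : nat -> formula L -> formula L.

Record structure (L : signature) := Structure {
  carrier :> Type;
  ifun : forall f : Fun L, ('I_(fun_ar f) -> carrier) -> carrier;
  irel : forall r : Rel L, ('I_(rel_ar r) -> carrier) -> Prop }.

Section Semantics.
Variables (L : signature) (M : structure L).

Fixpoint teval (e : nat -> M) (t : term L) : M :=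
  match t with
  | tvar i => e i
  | tapp f ts => @ifun L M f (fun j => teval e (ts j))
  end.

Fixpoint sat (e : nat -> M) (phi : formula L) : Prop :=
  match phi with
  | fEq t u => teval e t = teval e u
  | fRel r ts => @irel L M r (fun j => teval e (ts j))
  | fNot psi => ~ sat e psi
  | fAnd psi chi => sat e psi /\ sat e chi
  | fEx i psi => exists a : M, sat (fun k => if k == i then a else e k) psi
  end.

(* M |= phi(c_0,...,c_{k-1}) where the tuple c is plugged in for the
   variables 0..k-1 (any other free variables are read universally). *)
Definition holds (phi : formula L) (k : nat) (c : 'I_k -> M) : Prop :=
  forall e : nat -> M, (forall j : 'I_k, e j = c j) -> sat e phi.

Definition tcat (n k : nat) (a : 'I_n -> M) (b : 'I_k -> M) : 'I_(n + k) -> M :=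
  fun i => match split i with inl j => a j | inr j => b j end.

Definition definable (B : set M) (n : nat) (X : set ('I_n -> M)) : Prop :=
  exists (phi : formula L) (k : nat) (b : 'I_k -> M),
    (forall j, B (b j)) /\ X = [set a | holds phi (tcat a b)].

Arguments definable : clear implicits.

(* identification of L_x(B) with a subalgebra of L_{xy}(B) *)
Definition liftx (n m : nat) (X : set ('I_n -> M)) : set ('I_(n + m) -> M) :=
  [set c | X (fun i => c (lshift m i))].
Definition lifty (n m : nat) (Y : set ('I_m -> M)) : set ('I_(n + m) -> M) :=
  [set c | Y (fun j => c (rshift n j))].

Arguments liftx {n} m X.
Arguments lifty n {m} Y.

(* "small" = of cardinality strictly less than |K| (K is the saturation) *)
Definition small (K : Type) (A : set M) : Prop :=
  card_le A [set: K] /\ ~ card_le [set: K] A.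

Definition saturated (K : Type) : Prop :=
  forall (B : set M) (n : nat) (Sigma : set (set ('I_n -> M))),
    small K B -> (forall X, Sigma X -> definable B n X) ->
    (forall (k : nat) (F : 'I_k -> set ('I_n -> M)),
        (forall i, Sigma (F i)) -> exists a, forall i, F i a) ->
    exists a, forall X, Sigma X -> X a.

Definition automorphism (s : M -> M) : Prop :=
  bijective s /\
  (forall f a, s (@ifun L M f a) = @ifun L M f (fun j => s (a j))) /\
  (forall r a, @irel L M r a <-> @irel L M r (fun j => s (a j))).

Definition elementary_on (C : set M) (f : M -> M) : Prop :=
  forall (phi : formula L) (k : nat) (c : 'I_k -> M), (forall j, C (c j)) ->
    (holds phi c <-> holds phi (fun j => f (c j))).

Definition strongly_homogeneous (K : Type) : Prop :=
  forall (C : set M) (f : M -> M), small K C -> elementary_on C f ->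
    exists s, automorphism s /\ forall x, C x -> s x = f x.

(* M is a monster model of the complete theory T = Th(M), saturated and
   strongly homogeneous in the cardinal |K| > |T|. *)
Definition monster (K : Type) : Prop :=
  infinite_set [set: K] /\
  card_le [set: (Fun L + Rel L)%type] [set: K] /\
  ~ card_le [set: K] [set: (Fun L + Rel L)%type] /\
  saturated K /\ strongly_homogeneous K.

(* complete type over B in n variables, as an ultrafilter of the Boolean
   algebra of B-definable subsets of M^n *)
Definition is_type (B : set M) (n : nat) (p : set (set ('I_n -> M))) : Prop :=
  (forall X, p X -> definable B n X) /\
  p setT /\ ~ p set0 /\
  (forall X Y, p X -> p Y -> p (X `&` Y)) /\
  (forall X Y, p X -> definable B n Y -> X `<=` Y -> p Y) /\
  (forall X, definable B n X -> p X \/ p (~` X)).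

Arguments is_type : clear implicits.

(* p >=_{D,A} q : there is r in S_xy(A) with p|_A ⊆ r and p ∪ r |- q
   (|- : finitely many formulas of p ∪ r imply each formula of q in M) *)
Definition dominates (A : set M) (n m : nat)
    (p : set (set ('I_n -> M))) (q : set (set ('I_m -> M))) : Prop :=
  exists r : set (set ('I_(n + m) -> M)),
    is_type A (n + m) r /\
    (forall X, p X -> definable A n X -> r (liftx m X)) /\
    (forall Y, q Y ->
       exists (k1 k2 : nat) (P : 'I_k1 -> set ('I_n -> M))
              (Q : 'I_k2 -> set ('I_(n + m) -> M)),
         (forall i, p (P i)) /\ (forall j, r (Q j)) /\
         (forall c, (forall i, liftx m (P i) c) -> (forall j, Q j c) ->
                    lifty n Y c)).

Section Measures.
Variable R : realType.

(* finitely additive probability measure on L_n(B) (identified with the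
   B-definable subsets of M^n); values on other sets are irrelevant *)
Definition keisler (B : set M) (n : nat) (mu : set ('I_n -> M) -> R) : Prop :=
  mu setT = 1 /\
  (forall X, definable B n X -> 0 <= mu X) /\
  (forall X Y, definable B n X -> definable B n Y -> X `&` Y = set0 ->
     mu (X `|` Y) = mu X + mu Y).

Arguments keisler : clear implicits.

Definition dirac (n : nat) (p : set (set ('I_n -> M))) : set ('I_n -> M) -> R :=
  fun X => if `[< p X >] then 1 else 0.

Definition ext_space (A : set M) (n m : nat)
    (lam : set ('I_(n + m) -> M) -> R) (mu : set ('I_n -> M) -> R)
  : set (set ('I_(n + m) -> M) -> R) :=
  [set om | keisler setT (n + m) om /\
            (forall Z, definable A (n + m) Z -> om Z = lam Z) /\
            (forall X, definable setT n X -> om (liftx m X) = mu X)].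

Definition ext_dominates (A : set M) (n m : nat)
    (mu : set ('I_n -> M) -> R) (nu : set ('I_m -> M) -> R) : Prop :=
  exists lam : set ('I_(n + m) -> M) -> R,
    keisler A (n + m) lam /\
    (forall X, definable A n X -> lam (liftx m X) = mu X) /\
    (forall om, ext_space A lam mu om ->
       forall Y, definable setT m Y -> om (lifty n Y) = nu Y).

End Measures.
End Semantics.

From mathcomp Require Import all_boot all_order all_algebra.
From mathcomp Require Import boolp classical_sets cardinality reals.
From mathcomp Require Import zify lra.
Set Implicit Arguments. Unset Strict Implicit. Unset Printing Implicit Defensive.
Import Order.TTheory GRing.Theory Num.Theory.
Local Open Scope classical_set_scope.

(* Take lambda := delta_r for the type r in S_xy(A) witnessing p >=_{D,A} q.
   Since p|_A is contained in r, the x-marginal of delta_r is delta_p on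
   A-formulas.  If omega extends delta_r and has x-marginal delta_p, it gives
   measure 1 to every formula of p and of r, hence to their finite
   conjunctions, hence to every formula of q (each of which is implied by such
   a conjunction).  As q is complete, the y-marginal of omega is delta_q. *)

Section Syntax.
Variable L : signature.

Fixpoint tvar_bound (t : term L) : nat :=
  match t with
  | tvar i => i.+1
  | tapp f ts => \max_(j < fun_ar f) tvar_bound (ts j)
  end.

Fixpoint var_bound (phi : formula L) : nat :=
  match phi with
  | fEq t u => maxn (tvar_bound t) (tvar_bound u)
  | fRel r ts => \max_(j < rel_ar r) tvar_bound (ts j)
  | fNot psi => var_bound psi
  | fAnd psi chi => maxn (var_bound psi) (var_bound chi)
  | fEx _ psi => var_bound psi
  end.

Fixpoint trename (s : nat -> nat) (t : term L) : term L :=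
  match t with
  | tvar i => tvar L (s i)
  | tapp f ts => tapp (fun j => trename s (ts j))
  end.

Fixpoint rename (s : nat -> nat) (phi : formula L) : formula L :=
  match phi with
  | fEq t u => fEq (trename s t) (trename s u)
  | fRel r ts => fRel (fun j => trename s (ts j))
  | fNot psi => fNot (rename s psi)
  | fAnd psi chi => fAnd (rename s psi) (rename s chi)
  | fEx i psi =>
      let fresh := (\max_(j < var_bound psi) s j).+1 in
      fEx fresh (rename (fun j => if j == i then fresh else s j) psi)
  end.

Fixpoint fforall (l : seq nat) (phi : formula L) : formula L :=
  match l with
  | [::] => phi
  | i :: l' => fNot (fEx i (fNot (fforall l' phi)))
  end.

Definition fforall_from (k : nat) (phi : formula L) : formula L :=
  fforall (iota k (var_bound phi - k)) phi.

End Syntax.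

Section Semantics.
Variables (L : signature) (M : structure L).

Lemma teval_eq_on (t : term L) (e e' : nat -> M) :
  (forall i, i < tvar_bound t -> e i = e' i) -> teval e t = teval e' t.
Proof.
elim: t => [i|f ts IH] /= ee'; first exact: ee'.
congr ifun; apply: funext => j; apply: IH => i ilt; apply: ee'.
exact: leq_trans ilt (leq_bigmax (F := fun j => tvar_bound (ts j)) j).
Qed.

Lemma sat_eq_on (phi : formula L) (e e' : nat -> M) :
  (forall i, i < var_bound phi -> e i = e' i) -> sat e phi <-> sat e' phi.
Proof.
elim: phi e e' => [t u|r ts|psi IH|psi IHpsi chi IHchi|i psi IH] e e' /= ee'.
- by rewrite !(@teval_eq_on _ e e') // => k klt; apply: ee';
    rewrite leq_max klt ?orbT.
- suff -> : (fun j => teval e (ts j)) = (fun j => teval e' (ts j)) by [].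
  apply: funext => j; apply: teval_eq_on => k klt; apply: ee'.
  exact: leq_trans klt (leq_bigmax (F := fun j => tvar_bound (ts j)) j).
- by rewrite (IH e e').
- by rewrite (IHpsi e e') ?(IHchi e e') // => k klt; apply: ee';
    rewrite leq_max klt ?orbT.
- have eqa a : sat (fun k => if k == i then a else e k) psi <->
               sat (fun k => if k == i then a else e' k) psi.
    by apply: IH => k klt; case: eqP => // _; apply: ee'.
  by split=> -[a Ha]; exists a; apply/eqa.
Qed.

Lemma teval_rename s (t : term L) (e : nat -> M) :
  teval e (trename s t) = teval (e \o s) t.
Proof. by elim: t => [i|f ts IH] //=; congr ifun; apply: funext => j. Qed.

Lemma sat_rename s (phi : formula L) (e : nat -> M) :
  sat e (rename s phi) <-> sat (e \o s) phi.
Proof.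
elim: phi s e => [t u|r ts|psi IH|psi IHpsi chi IHchi|i psi IH] s e /=.
- by rewrite !teval_rename.
- suff -> : (fun j => teval e (trename s (ts j))) =
            (fun j => teval (e \o s) (ts j)) by [].
  by apply: funext => j; rewrite teval_rename.
- by rewrite IH.
- by rewrite IHpsi IHchi.
- set fresh := (\max_(j < var_bound psi) s j).+1.
  have eqa a : sat (fun k => if k == fresh then a else e k)
                 (rename (fun j => if j == i then fresh else s j) psi) <->
               sat (fun k => if k == i then a else (e \o s) k) psi.
    rewrite IH; apply: sat_eq_on => k klt /=.
    case: (k == i); first by rewrite eqxx.
    have : s k < fresh.
      rewrite ltnS.
      exact: (leq_bigmax (F := fun j : 'I_(var_bound psi) => s j) (Ordinal klt)).
    by rewrite ltn_neqAle => /andP [/negbTE -> _].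
  by split=> -[a Ha]; exists a; apply/eqa.
Qed.

Lemma sat_fforall l (phi : formula L) (e : nat -> M) :
  sat e (fforall l phi) <->
  forall e', (forall j, j \notin l -> e' j = e j) -> sat e' phi.
Proof.
elim: l e => [|i l IH] e /=.
  split=> [sat_e e' e'e|]; last exact.
  by have -> : e' = e by apply: funext => j; apply: e'e.
split=> [nex e' e'e|all_e [a]].
  apply: contrapT => ne'; apply: nex; exists (e' i); apply/IH => sat_e'.
  apply/ne'/sat_e' => j; case: eqP => [->//|/eqP ji] jl.
  by apply: e'e; rewrite in_cons negb_or ji.
apply; apply/IH => e' e'e; apply: all_e => j.
by rewrite in_cons negb_or => /andP [/negbTE ji jl]; rewrite e'e // ji.
Qed.

Lemma sat_fforall_from k (phi : formula L) (e : nat -> M) :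
  sat e (fforall_from k phi) <-> holds phi (fun j : 'I_k => e j).
Proof.
rewrite sat_fforall; split=> [all_e e' e'e|hphi e' e'e].
  pose e'' j := if j \in iota k (var_bound phi - k) then e' j else e j.
  apply/(@sat_eq_on _ e'') => [j jlt|]; last first.
    by apply: all_e => j /negbTE jout; rewrite /e'' jout.
  rewrite /e''; case: ifP => // /negbT; rewrite mem_iota => jout.
  have jk : j < k by lia.
  by rewrite (e'e (Ordinal jk)).
by apply: hphi => j; apply: e'e; rewrite mem_iota; move: (ltn_ord j); lia.
Qed.

Definition skip (s g j : nat) : nat := if j < s then j else j + g.

Lemma holds_rename_skip (phi : formula L)
    s g k k' (c : 'I_k -> M) (c' : 'I_k' -> M) :
  s <= k -> k' = k + g ->
  (forall (i : 'I_k) (i' : 'I_k'), i' = skip s g i :> nat -> c' i' = c i) ->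
  holds (rename (skip s g) phi) c' <-> holds phi c.
Proof.
move=> sk k'E cc'; split=> [hphi e ec|hphi e ec']; last first.
  rewrite sat_rename; apply: hphi => j /=.
  have jk' : skip s g j < k' by rewrite /skip; case: ifP; move: (ltn_ord j); lia.
  by rewrite (ec' (Ordinal jk')); apply: cc'.
pose e' i := if i < s then e i
             else if i < s + g then (if insub i is Some j then c' j else e i)
             else e (i - g).
have -> : e = e' \o skip s g.
  apply: funext => j; rewrite /e' /skip /=.
  by case: (ltnP j s) => js; [rewrite js | rewrite ifF ?ifF ?addnK //; lia].
apply/sat_rename/hphi => j; rewrite /e'.
case: ltnP => js; last case: ltnP => jsg.
- have jk : j < k by lia.
  by rewrite (ec (Ordinal jk)); symmetry; apply: cc' => /=; rewrite /skip js.
- by case: insubP => [j' _ j'j|]; [congr c'; apply: val_inj | rewrite ltn_ord].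
- have jk : j - g < k by move: (ltn_ord j); lia.
  rewrite (ec (Ordinal jk)); symmetry; apply: cc' => /=.
  by rewrite /skip ifF; lia.
Qed.

End Semantics.

Ltac ord_bounds :=
  repeat match goal with x : ordinal ?n |- _ =>
    lazymatch goal with _ : is_true (nat_of_ord x < n) |- _ => fail
    | _ => have := ltn_ord x; intro end end.

Ltac tcat_skip_index :=
  let i := fresh "i" in let i' := fresh "i'" in let E := fresh "E" in
  move=> i i' E; rewrite /tcat; repeat (case: splitP => ? ?);
  move: E; rewrite /skip ?ltn0 /=; (case: ifP => ? E || move=> E);
  ord_bounds; first [by congr (_ _); apply: val_inj => /=; lia | exfalso; lia].

Section Definability.
Variables (L : signature) (M : structure L).
Implicit Types (B : set M).

Lemma definableS B B' n (X : set ('I_n -> M)) :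
  B `<=` B' -> definable B X -> definable B' X.
Proof.
by move=> BB' [phi [k [b [bB ->]]]]; exists phi, k, b; split=> // j; apply/BB'.
Qed.

Lemma definable_liftx B n m (X : set ('I_n -> M)) :
  definable B X -> definable B (liftx (m := m) X).
Proof.
case=> phi [k [b [bB ->]]]; exists (rename (skip n m) phi), k, b; split=> //.
apply: funext => c; apply: propext; symmetry.
by apply: (@holds_rename_skip _ _ _ _ _ (n + k)); [lia | lia | tcat_skip_index].
Qed.

Lemma definable_lifty B n m (Y : set ('I_m -> M)) :
  definable B Y -> definable B (lifty (n := n) Y).
Proof.
case=> phi [k [b [bB ->]]]; exists (rename (skip 0 n) phi), k, b; split=> //.
apply: funext => c; apply: propext; symmetry.
by apply: (@holds_rename_skip _ _ _ _ _ (m + k)); [lia | lia | tcat_skip_index].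
Qed.

Lemma definableI B n (X Y : set ('I_n -> M)) :
  definable B X -> definable B Y -> definable B (X `&` Y).
Proof.
case=> phi [k [b [bB ->]]] [psi [k' [b' [b'B ->]]]].
exists (fAnd (rename (skip (n + k) k') phi) (rename (skip n k) psi)), (k + k').
exists (tcat b b'); split=> [j|]; first by rewrite /tcat; case: split.
apply: funext => a; apply: propext.
have hphi : holds (rename (skip (n + k) k') phi) (tcat a (tcat b b')) <->
            holds phi (tcat a b).
  by apply: (@holds_rename_skip _ _ _ _ _ (n + k)); [lia | lia | tcat_skip_index].
have hpsi : holds (rename (skip n k) psi) (tcat a (tcat b b')) <->
            holds psi (tcat a b').
  apply: (@holds_rename_skip _ _ _ _ _ (n + k'));
  [lia | lia | tcat_skip_index].
split=> [[/hphi Xa /hpsi Ya] e ea|hand]; first by split; [apply: Xa | apply: Ya].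
by split; [apply/hphi | apply/hpsi] => e ea; have [] := hand e ea.
Qed.

Lemma definable_full_of_empty B n (X : set ('I_n -> M)) :
  ~ inhabited M -> definable B X -> X = setT.
Proof.
move=> M0 [phi [k [b [_ ->]]]]; apply/seteqP; split=> // a _ e.
by case: M0; exists; apply: e 0.
Qed.

(* Because [holds] reads the variables beyond the tuple universally, the
   complement is defined by the negation of the universal closure; turning a
   tuple into an assignment needs some [x0 : M]. *)
Lemma definableC (x0 : M) B n (X : set ('I_n -> M)) :
  definable B X -> definable B (~` X).
Proof.
case=> phi [k [b [bB ->]]].
exists (fNot (fforall_from (n + k) phi)), k, b; split=> //.
apply: funext => a; apply: propext.
split=> [nXa e ea /sat_fforall_from|nclose Xa].
  by rewrite (_ : (fun j : 'I_(n + k) => e j) = tcat a b) //; apply: funext.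
pose e j := if insub j is Some o then tcat a b o else x0.
have ea (j : 'I_(n + k)) : e j = tcat a b j.
  rewrite /e; case: insubP => [o _ oj|]; last by rewrite ltn_ord.
  by congr (tcat a b); apply: val_inj.
apply: (nclose e ea); apply/sat_fforall_from.
by rewrite (_ : (fun j : 'I_(n + k) => e j) = tcat a b) //; apply: funext.
Qed.

Lemma definableU B n (X Y : set ('I_n -> M)) :
  definable B X -> definable B Y -> definable B (X `|` Y).
Proof.
move=> DX DY; case: (pselect (inhabited M)) => [[x0]|M0].
  rewrite -[X `|` Y]setCK setCU.
  by apply: (definableC x0); apply: definableI; apply: (definableC x0).
have XT := definable_full_of_empty M0 DX.
by rewrite XT setTU -XT.
Qed.

End Definability.

Lemma type_bigcap (L : signature) (M : structure L) (B : set M) n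
    (p : set (set ('I_n -> M))) k (F : 'I_k -> set ('I_n -> M)) :
  is_type B p -> (forall i, p (F i)) -> p [set a | forall i, F i a].
Proof.
move=> [_ [pT [_ [pI _]]]]; elim: k F => [|k IH] F pF.
  by rewrite (_ : [set a | _] = setT) //; apply/seteqP; split=> // a _ [].
rewrite (_ : [set a | _] = F ord0 `&` [set a | forall i, F (lift ord0 i) a]).
  by apply: pI; [apply: pF | apply: IH => i; apply: pF].
apply/seteqP; split=> [a Fa|a [F0a Fa] i]; first by split=> [|i]; apply: Fa.
by case: (unliftP ord0 i) => [j ->|->].
Qed.

Section KeislerMeasure.
Variables (L : signature) (M : structure L) (R : realType) (x0 : M).
Variables (B : set M) (n : nat) (mu : set ('I_n -> M) -> R).
Hypothesis mu_keisler : keisler B mu.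
Local Open Scope ring_scope.

Lemma keisler_ge0 X : definable B X -> 0 <= mu X.
Proof. by case: mu_keisler => _ [+ _]; apply. Qed.

Lemma keislerD X Y : definable B X -> definable B Y -> X `&` Y = set0 ->
  mu (X `|` Y) = mu X + mu Y.
Proof. by case: mu_keisler => _ [_]; apply. Qed.

Lemma keislerC X : definable B X -> mu (~` X) = 1 - mu X.
Proof.
move=> DX; case: mu_keisler => mu1 _.
have DCX := definableC x0 DX.
by rewrite -mu1 -(setUv X) keislerD ?setICr // addrAC subrr add0r.
Qed.

Lemma keisler_le1 X : definable B X -> mu X <= 1.
Proof.
move=> DX; rewrite -subr_ge0 -keislerC //.
exact/keisler_ge0/(definableC x0).
Qed.

Lemma keisler_setID X Y : definable B X -> definable B Y ->
  mu X = mu (X `&` Y) + mu (X `&` ~` Y).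
Proof.
move=> DX DY; rewrite -keislerD -?setDE ?setUIDK //.
- by apply: definableI.
- by apply/definableI/(definableC x0).
by apply/seteqP; split=> // a [[_ Ya] [_ /(_ Ya)]].
Qed.

Lemma le_keisler X Y : definable B X -> definable B Y -> X `<=` Y ->
  mu X <= mu Y.
Proof.
move=> DX DY XY; rewrite (keisler_setID DY DX) (setIidr XY) lerDl.
by apply/keisler_ge0/definableI/(definableC x0).
Qed.

Lemma keisler_eq1S X Y : definable B X -> definable B Y -> X `<=` Y ->
  mu X = 1 -> mu Y = 1.
Proof.
move=> DX DY XY muX; apply/eqP; rewrite eq_le keisler_le1 //= -muX.
exact: le_keisler.
Qed.

Lemma keislerI_eq1 X Y : definable B X -> definable B Y ->
  mu X = 1 -> mu Y = 1 -> mu (X `&` Y) = 1.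
Proof.
move=> DX DY muX muY.
have DCY := definableC x0 DY.
have DXCY : definable B (X `&` ~` Y) by apply: definableI.
have : mu (X `&` ~` Y) <= mu (~` Y) by apply: le_keisler => // a [].
have := keisler_ge0 DXCY; have := keisler_setID DX DY.
rewrite keislerC // muX muY; lra.
Qed.

End KeislerMeasure.

Section DiracMeasure.
Variables (L : signature) (M : structure L) (R : realType).
Local Open Scope ring_scope.

Lemma dirac_eq1 n (p : set (set ('I_n -> M))) X : p X -> dirac R p X = 1.
Proof. by move=> pX; rewrite /dirac asboolT. Qed.

Lemma dirac_eq0 n (p : set (set ('I_n -> M))) X : ~ p X -> dirac R p X = 0.
Proof. by move=> npX; rewrite /dirac asboolF. Qed.

Lemma keisler_dirac B n (r : set (set ('I_n -> M))) :
  is_type B r -> keisler B (dirac R r).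
Proof.
move=> [_ [rT [r0 [rI [rU rC]]]]]; split; first exact: dirac_eq1.
split=> [X _|X Y DX DY XY0]; first by rewrite /dirac; case: asboolP.
have DXY := definableU DX DY.
have [rX|nrX] := pselect (r X).
  have nrY : ~ r Y by move=> rY; apply: r0; rewrite -XY0; apply: rI.
  rewrite (dirac_eq0 nrY) !dirac_eq1 ?addr0 //.
  by apply: (rU _ _ rX DXY) => a; left.
have [rY|nrY] := pselect (r Y).
  rewrite (dirac_eq0 nrX) !dirac_eq1 ?add0r //.
  by apply: (rU _ _ rY DXY) => a; right.
rewrite !dirac_eq0 ?addr0 // => rXY; apply: r0.
have [//|rCX] := rC X DX; have [//|rCY] := rC Y DY.
by rewrite -(setICr (X `|` Y)) setCU; apply: (rI) => //; apply: rI.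
Qed.

Lemma dirac_liftx A n m (p : set (set ('I_n -> M)))
    (r : set (set ('I_(n + m) -> M))) :
  is_type setT p -> is_type A r ->
  (forall X, p X -> definable A X -> r (liftx (m := m) X)) ->
  forall X, definable A X -> dirac R r (liftx (m := m) X) = dirac R p X.
Proof.
move=> [_ [pT [_ [_ [_ pC]]]]] [_ [_ [r0 [rI _]]]] pr X DX.
have [pX|npX] := pselect (p X); first by rewrite !dirac_eq1 //; apply: pr.
rewrite !dirac_eq0 // => rX.
have [[x0]|M0] := pselect (inhabited M); last first.
  by apply: npX; rewrite (definable_full_of_empty M0 DX).
have [//|pCX] := pC X (definableS (@subsetT _ A) DX).
apply: r0; rewrite -(setICr (liftx (m := m) X)); apply: rI => //.
exact: pr pCX (definableC x0 DX).
Qed.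

Lemma ext_space_dirac_eq1 (x0 : M) A n m (p : set (set ('I_n -> M)))
    (r : set (set ('I_(n + m) -> M))) om k1 k2
    (P : 'I_k1 -> set ('I_n -> M)) (Q : 'I_k2 -> set ('I_(n + m) -> M)) Z :
  is_type setT p -> is_type A r -> ext_space A (dirac R r) (dirac R p) om ->
  (forall i, p (P i)) -> (forall j, r (Q j)) -> definable setT Z ->
  (forall c, (forall i, liftx (m := m) (P i) c) -> (forall j, Q j c) -> Z c) ->
  om Z = 1.
Proof.
move=> tp tr [om_keisler [omA omx]] pP rQ DZ PQZ.
have pPP := type_bigcap tp pP; have rQQ := type_bigcap tr rQ.
have DPP := definable_liftx m (tp.1 _ pPP).
have DQQ := definableS (@subsetT _ A) (tr.1 _ rQQ).
apply: (keisler_eq1S x0 om_keisler (definableI DPP DQQ) DZ).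
  by move=> c [Pc Qc]; apply: PQZ.
apply: (keislerI_eq1 x0 om_keisler DPP DQQ).
  by rewrite omx ?dirac_eq1 //; apply: tp.1.
by rewrite omA ?dirac_eq1 //; apply: tr.1.
Qed.

Lemma ext_space_dirac_lifty A n m
    (p : set (set ('I_n -> M))) (q : set (set ('I_m -> M)))
    (r : set (set ('I_(n + m) -> M))) om :
  is_type setT p -> is_type setT q -> is_type A r ->
  (forall Y, q Y ->
     exists (k1 k2 : nat) (P : 'I_k1 -> set ('I_n -> M))
            (Q : 'I_k2 -> set ('I_(n + m) -> M)),
       (forall i, p (P i)) /\ (forall j, r (Q j)) /\
       (forall c, (forall i, liftx (m := m) (P i) c) -> (forall j, Q j c) ->
                  lifty (n := n) Y c)) ->
  ext_space A (dirac R r) (dirac R p) om ->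
  forall Y, definable setT Y -> om (lifty (n := n) Y) = dirac R q Y.
Proof.
move=> tp [qD [qT [_ [_ [_ qC]]]]] tr pqr om_ext Y DY.
have [[x0]|M0] := pselect (inhabited M); last first.
  by rewrite (definable_full_of_empty M0 DY) dirac_eq1 //; case: om_ext => -[].
have om_lifty_eq1 Y' : q Y' -> om (lifty (n := n) Y') = 1.
  move=> qY'; have [k1 [k2 [P [Q [pP [rQ PQY']]]]]] := pqr Y' qY'.
  apply: (ext_space_dirac_eq1 x0 tp tr om_ext pP rQ) => //.
  exact: definable_lifty (qD _ qY').
have [qY|nqY] := pselect (q Y); first by rewrite dirac_eq1 // om_lifty_eq1.
have [//|qCY] := qC Y DY.
rewrite dirac_eq0 //; have := om_lifty_eq1 _ qCY.
rewrite [lifty _](_ : _ = ~` lifty (n := n) Y) //.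
rewrite (keislerC x0 om_ext.1 (definable_lifty n DY)); lra.
Qed.

End DiracMeasure.

Theorem proposition3p6 (L : signature) (M : structure L) (K : Type)
  (R : realType) (A : set M) (n m : nat)
  (p : set (set ('I_n -> M))) (q : set (set ('I_m -> M))) :
  monster M K -> small K A ->
  is_type setT p -> is_type setT q ->
  dominates A p q ->
  ext_dominates A (dirac R p) (dirac R q).
Proof.
move=> _ _ tp tq [r [tr [pr pqr]]].
exists (dirac R r); split; first exact: keisler_dirac.
split; first exact: dirac_liftx.
by move=> om om_ext; apply: ext_space_dirac_lifty tp tq tr pqr om_ext.
Qed.
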